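(* In the setting described in the context, assume $\sum_{j\in J}a_{ij}\hat{x}_j\ge b_i$ for all $i\in I$. For each $i\in I$ let $t_i$ be the optimal value and $(\Gamma^{(i)},\varphi^{(i)})$ an optimal solution of \[ \min_{\Gamma,\varphi}\ \sum_{j\in J}a_{ij}\hat{x}_j-\sum_{j\in J_i}\alpha_{ij}|\hat{x}_j|\varphi_{ij}-b_i \] subject to $\sum_{j\in J_i}\varphi_{ij}\le\Gamma_i$; $0\le\varphi_{ij}\le1$ for all $j\in J_i$; $\Gamma\in\Theta\cap\Omega$. Let $i^*\in\arg\min_{i\in I}t_i$ and $\Gamma^*=\Gamma^{(i^* )}$. Then the optimal value of RLO-CCU-DG is $t_{i^*}$, and an optimal solution has $\Gamma=\Gamma^*$, $c=\bar{a}_{i^*}(\Gamma^*_{i^*},\hat{x})$, $\pi=e_{i^*}$. Moreover, if for every $i\in I$ either $|a_{ij}|>\alpha_{ij}$ for some $j\in J_i$ or $a_{ij}\neq0$ for some $j\in J\setminus J_i$, then $c\neq0$ and $\bar{a}_i(\Gamma_i,x)\neq0$ for all $i\in I$ and all $x\in\mathbb{R}^n$.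
   Context: Let $I=\{1,\dots,m\}$, $J=\{1,\dots,n\}$. Given are $a_{ij}\in\mathbb{R}$, $b\in\mathbb{R}^m$, index sets $J_i\subseteq J$, nonnegative numbers $\alpha_{ij}$ ($j\in J_i,i\in I$), an observed point $\hat{x}\in\mathbb{R}^n$, and a convex set $\Omega\subseteq\mathbb{R}^m$. Let $\mathrm{sgn}(t)=1$ if $t\ge0$ and $-1$ otherwise; $e_i$ is the $i$-th unit vector of $\mathbb{R}^m$. For $i\in I$ and $x\in\mathbb{R}^n$ let $j^i_1(x),\dots,j^i_{|J_i|}(x)$ order $J_i$ so that $\alpha_{ij^i_k(x)}|x_{j^i_k(x)}|$ is the $k$-th largest element of $\{\alpha_{ij}|x_j|\}_{j\in J_i}$. For $\Gamma_i\in[0,|J_i|]$ let $P_i(\Gamma_i,x)=\sum_{k=1}^{\lfloor\Gamma_i\rfloor}\alpha_{ij^i_k(x)}|x_{j^i_k(x)}|+(\Gamma_i-\lfloor\Gamma_i\rfloor)\alpha_{ij^i_{\lceil\Gamma_i\rceil}(x)}|x_{j^i_{\lceil\Gamma_i\rceil}(x)}|$ (last term $0$ for integer $\Gamma_i$), and define $\bar{a}_i(\Gamma_i,x)\in\mathbb{R}^n$ by $\bar{a}_{ij}(\Gamma_i,x)=a_{ij}-\mathrm{sgn}(x_j)\alpha_{ij}$ if $j=j^i_k(x)$ for some $k\in\{1,\dots,\lfloor\Gamma_i\rfloor\}$; $\bar{a}_{ij}(\Gamma_i,x)=a_{ij}-\mathrm{sgn}(x_j)\alpha_{ij}(\Gamma_i-\lfloor\Gamma_i\rfloor)$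 if $j=j^i_{\lfloor\Gamma_i\rfloor+1}(x)$; and $\bar{a}_{ij}(\Gamma_i,x)=a_{ij}$ otherwise. Let $s_i=\sum_{j\in J}a_{ij}\hat{x}_j-b_i$, $\hat{I}=\{i\in I:0\le s_i\le\sum_{j\in J_i}\alpha_{ij}|\hat{x}_j|\}$, and for $i\in\hat{I}$ let $\underline{\Gamma}_i=\min\{\sum_{j\in J_i}w_j:\sum_{j\in J_i}\alpha_{ij}|\hat{x}_j|w_j=s_i,\ 0\le w_j\le1\}$, so $s_i=P_i(\underline{\Gamma}_i,\hat{x})$. Standing assumption: for each $i\in\hat{I}$, $\underline{\Gamma}_i$ is the unique $\Gamma_i\in[0,|J_i|]$ with $s_i=P_i(\Gamma_i,\hat{x})$. Let $\Theta=\{\Gamma\in\mathbb{R}^m:\Gamma_i\in[0,\underline{\Gamma}_i]\ \forall i\in\hat{I};\ \Gamma_i\in[0,|J_i|]\ \forall i\in I\setminus\hat{I}\}$. The problem RLO-CCU-DG is \[ \min_{\Gamma,c,u,y,z,\pi,\varphi,\lambda,\mu}\ \sum_{j\in J}c_j\hat{x}_j-\sum_{i\in I}b_i\pi_i \] subject to: $\Gamma\in\Omega$; $\alpha_{ij}\hat{x}_j+u_{ij}\ge0$ and $-\alpha_{ij}\hat{x}_j+u_{ij}\ge0$ ($j\in J_i,i\in I$); $y_{ij}+z_i\ge u_{ij}$ ($j\in J_i,i\in I$); $\sum_{j\in J}a_{ij}\hat{x}_j-\sum_{j\in J_i}y_{ij}-\Gamma_iz_i\ge b_i$ ($i\in I$);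 $y_{ij},z_i\ge0$; $0\le\Gamma_i\le|J_i|$ ($i\in I$); $\sum_{i\in I}\pi_i=1$; $\sum_{i\in I}a_{ij}\pi_i+\sum_{i\in I:j\in J_i}\alpha_{ij}(\lambda_{ij}-\mu_{ij})=c_j$ ($j\in J$); $\varphi_{ij}\le\pi_i$ and $\varphi_{ij}=\lambda_{ij}+\mu_{ij}$ ($j\in J_i,i\in I$); $\sum_{j\in J_i}\varphi_{ij}\le\Gamma_i\pi_i$ ($i\in I$); $\pi_i,\varphi_{ij},\lambda_{ij},\mu_{ij}\ge0$ ($j\in J_i,i\in I$). *)

From mathcomp Require Import all_boot all_order all_algebra.
Set Implicit Arguments. Unset Strict Implicit. Unset Printing Implicit Defensive.
Import Order.TTheory GRing.Theory Num.Theory.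
Local Open Scope ring_scope.

Section RLO.
Variables (R : archiRealFieldType) (m n : nat).
Variables (a : 'I_m -> 'I_n -> R) (b : 'I_m -> R) (J : 'I_m -> {set 'I_n})
          (alpha : 'I_m -> 'I_n -> R) (xhat : 'I_n -> R).

Definition sgn (t : R) : R := if 0 <= t then 1 else -1.

Definition cardJ (i : 'I_m) : R := (#|J i|)%:R.

(* the ordering j^i_1(x), ..., j^i_{|J_i|}(x) of J_i by decreasing
   alpha_ij |x_j|; ties broken by increasing index (stable sort of enum J_i).
   j^i_k(x) = nth _ (ordJ i x) k.-1 *)
Definition ordJ (i : 'I_m) (x : 'I_n -> R) : seq 'I_n :=
  sort (fun j k => alpha i k * `|x k| <= alpha i j * `|x j|) (enum (J i)).

Definition ordvals (i : 'I_m) (x : 'I_n -> R) : seq R :=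
  [seq alpha i j * `|x j| | j <- ordJ i x].

Definition flo (G : R) : nat := Num.truncn G.
Definition cei (G : R) : nat := if (flo G)%:R == G then flo G else (flo G).+1.

Definition P (i : 'I_m) (G : R) (x : 'I_n -> R) : R :=
  \sum_(0 <= k < flo G) nth 0 (ordvals i x) k
  + (if cei G == flo G then 0
     else (G - (flo G)%:R) * nth 0 (ordvals i x) (cei G).-1).

(* abar_i(Gamma_i, x) : position of j in the ordering is index j (ordJ i x)
   (0-based), so j = j^i_k(x) with k = index + 1 *)
Definition abar (i : 'I_m) (G : R) (x : 'I_n -> R) (j : 'I_n) : R :=
  if (j \in J i) && (index j (ordJ i x) < flo G)%N then
    a i j - sgn (x j) * alpha i j
  else if (j \in J i) && (index j (ordJ i x) == flo G) then
    a i j - sgn (x j) * alpha i j * (G - (flo G)%:R)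
  else a i j.

Definition s (i : 'I_m) : R := \sum_j a i j * xhat j - b i.

Definition Ihat (i : 'I_m) : Prop :=
  0 <= s i /\ s i <= \sum_(j in J i) alpha i j * `|xhat j|.

(* feasible set of the LP defining underline Gamma_i *)
Definition lowLP_feas (i : 'I_m) (w : 'I_n -> R) : Prop :=
  \sum_(j in J i) alpha i j * `|xhat j| * w j = s i /\
  (forall j, j \in J i -> 0 <= w j <= 1).

Definition is_Glow (i : 'I_m) (g : R) : Prop :=
  (exists w, lowLP_feas i w /\ \sum_(j in J i) w j = g) /\
  (forall w, lowLP_feas i w -> g <= \sum_(j in J i) w j).

Definition Theta (Glow : 'I_m -> R) (G : 'I_m -> R) : Prop :=
  forall i, (Ihat i -> 0 <= G i <= Glow i) /\
            (~ Ihat i -> 0 <= G i <= cardJ i).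

Definition convex_set (Omega : ('I_m -> R) -> Prop) : Prop :=
  forall (x y : 'I_m -> R) (t : R), 0 <= t <= 1 -> Omega x -> Omega y ->
    Omega (fun i => t * x i + (1 - t) * y i).

Definition sub_feas (Omega : ('I_m -> R) -> Prop) (Glow : 'I_m -> R)
  (i : 'I_m) (G : 'I_m -> R) (phi : 'I_n -> R) : Prop :=
  \sum_(j in J i) phi j <= G i /\
  (forall j, j \in J i -> 0 <= phi j <= 1) /\
  Theta Glow G /\ Omega G.

Definition sub_obj (i : 'I_m) (phi : 'I_n -> R) : R :=
  \sum_j a i j * xhat j - \sum_(j in J i) alpha i j * `|xhat j| * phi j - b i.

Definition dg_feas (Omega : ('I_m -> R) -> Prop)
  (G : 'I_m -> R) (c : 'I_n -> R) (u y : 'I_m -> 'I_n -> R) (z : 'I_m -> R)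
  (pi : 'I_m -> R) (phi lam mu : 'I_m -> 'I_n -> R) : Prop :=
  Omega G /\
  (forall i j, j \in J i ->
     [/\ alpha i j * xhat j + u i j >= 0, - (alpha i j * xhat j) + u i j >= 0,
         y i j + z i >= u i j, y i j >= 0 &
         [/\ phi i j <= pi i, phi i j = lam i j + mu i j,
             phi i j >= 0, lam i j >= 0 & mu i j >= 0]]) /\
  (forall i,
     [/\ \sum_j a i j * xhat j - \sum_(j in J i) y i j - G i * z i >= b i,
         z i >= 0, 0 <= G i <= cardJ i, pi i >= 0 &
         \sum_(j in J i) phi i j <= G i * pi i]) /\
  \sum_i pi i = 1 /\
  (forall j, \sum_i a i j * pi i
             + \sum_(i | j \in J i) alpha i j * (lam i j - mu i j) = c j).

Definition dg_obj (c : 'I_n -> R) (pi : 'I_m -> R) : R :=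
  \sum_j c j * xhat j - \sum_i b i * pi i.

Definition unitv (i : 'I_m) : 'I_m -> R := fun k => if k == i then 1 else 0.

End RLO.

(* For fixed i and x, P_i(G, x) is the optimal value of the fractional
   knapsack LP  max { sum_j alpha_ij |x_j| phi_j : sum_j phi_j <= G, 0 <= phi_j <= 1 }:
   it is attained by the greedy vector [topw] filling items in the order
   j^i_1, j^i_2, ..., and matched by the dual solution whose budget multiplier
   is the cutoff value at position floor(G) + 1.  With monotonicity of P_i and
   the uniqueness of Glow_i this shows that Theta is the set of Gamma whose rows
   are robustly feasible at xhat.  In a feasible point of RLO-CCU-DG the (y, z)
   part certifies this robust feasibility, and every row with pi_i > 0 rescales
   to the feasible point phi_i / pi_i of subproblem i, so the objective is a
   pi-weighted average of values >= t_i >= t_istar.  Equality holds for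
   pi = e_istar, phi = topw and the dual certificate, because
   t_istar = s_istar - P_istar(Gamma*_istar, xhat).  Finally abar = a - sgn(x) alpha topw
   with 0 <= topw <= 1 vanishes only if |a_ij| <= alpha_ij on J_i and a_ij = 0 off J_i. *)

From Pilot Require Import Defs.
From mathcomp Require Import all_boot all_order all_algebra.
From mathcomp Require Import lra ring.
Set Implicit Arguments. Unset Strict Implicit. Unset Printing Implicit Defensive.
Import Order.TTheory GRing.Theory Num.Theory.
Local Open Scope ring_scope.

Section Fill.
Variable R : archiRealFieldType.

Definition fill (G : R) (k : nat) : R :=
  if (k < flo G)%N then 1 else if k == flo G then G - (flo G)%:R else 0.

Lemma frac_itv (G : R) : 0 <= G -> 0 <= G - (flo G)%:R < 1.
Proof.
move=> /truncn_itv /andP[lo hi]; rewrite -natr1 in hi.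
by apply/andP; split; lra.
Qed.

Lemma fill_itv (G : R) k : 0 <= G -> 0 <= fill G k <= 1.
Proof.
move=> /frac_itv /andP[f0 f1]; rewrite /fill.
case: ifP => _; first by rewrite ler01 lexx.
by case: ifP => _; rewrite ?lexx ?ler01 ?f0 ?ltW.
Qed.

Lemma fill0 k : fill 0 k = 0.
Proof. by rewrite /fill /flo truncn0 subrr; case: ifP => //; case: ifP. Qed.

Lemma sum_fill (f : nat -> R) N G : (forall k, (N <= k)%N -> f k = 0) ->
  \sum_(0 <= k < N) f k * fill G k
  = \sum_(0 <= k < flo G) f k + (G - (flo G)%:R) * f (flo G).
Proof.
move=> f_out; set M := (N + (flo G).+1)%N.
have -> : \sum_(0 <= k < N) f k * fill G k = \sum_(0 <= k < M) f k * fill G k.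
  rewrite [RHS](big_cat_nat (leq0n N) (leq_addr _ _)) /=.
  rewrite [X in _ = _ + X]big_nat_cond [X in _ = _ + X]big1 ?addr0 //.
  by move=> k /andP[/andP[/f_out -> _] _]; rewrite mul0r.
have lt_fM : (flo G < M)%N by rewrite /M addnS ltnS leq_addl.
rewrite (big_cat_nat (leq0n (flo G)) (ltnW lt_fM)) [\sum_(flo G <= i < M) _]big_ltn //=.
rewrite {2}/fill ltnn eqxx [X in _ + (_ + X)]big_nat_cond [X in _ + (_ + X)]big1.
  rewrite addr0 mulrC; congr (_ + _).
  by apply: eq_big_nat => k /andP[_ lt_k]; rewrite /fill lt_k mulr1.
by move=> k /andP[/andP[lt_k _] _]; rewrite /fill ltnNge ltnW //= gtn_eqF // mulr0.
Qed.

Lemma sum_index_fill (T : eqType) (s : seq T) (f : T -> R) G : uniq s ->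
  \sum_(j <- s) f j * fill G (index j s)
  = \sum_(0 <= k < flo G) nth 0 (map f s) k + (G - (flo G)%:R) * nth 0 (map f s) (flo G).
Proof.
case: s => [|j0 s'] uniq_s.
  by rewrite big_nil nth_nil mulr0 addr0 big1_seq // => k; rewrite nth_nil.
set s := j0 :: s' in uniq_s *.
rewrite (big_nth j0) -(sum_fill _ (N := size s)); last first.
  by move=> k le_k; rewrite nth_default ?size_map.
by apply: eq_big_nat => k /andP[_ lt_k]; rewrite index_uniq // (nth_map j0).
Qed.

End Fill.

Section FractionalKnapsack.
Variables (R : archiRealFieldType) (T : finType) (A : {set T}) (v : T -> R).

Local Notation ord := (sort (fun j k => v k <= v j) (enum A)).
Local Notation vals := (map v ord).

(* Ranks are 0-based: the item of rank k in [ord] is the paper's j_{k+1}. *)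
Definition topw (G : R) (j : T) : R := fill G (index j ord).
Definition cutoff (G : R) : R := nth 0 vals (flo G).

Lemma topw_itv G j : 0 <= G -> 0 <= topw G j <= 1.
Proof. exact: fill_itv. Qed.

Lemma topw0 j : topw 0 j = 0.
Proof. exact: fill0. Qed.

Lemma size_ord : size ord = #|A|.
Proof. by rewrite size_sort cardE. Qed.

Lemma sum_over_ord (F : T -> R) : \sum_(j in A) F j = \sum_(j <- ord) F j.
Proof. by rewrite -big_enum; apply: perm_big; rewrite perm_sym perm_sort. Qed.

Lemma topvalE G : \sum_(j in A) v j * topw G j
  = \sum_(0 <= k < flo G) nth 0 vals k + (G - (flo G)%:R) * cutoff G.
Proof. by rewrite sum_over_ord sum_index_fill // sort_uniq enum_uniq. Qed.

Lemma sum_topw_small G : (flo G < #|A|)%N -> \sum_(j in A) topw G j = G.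
Proof.
move=> lt_fA; rewrite sum_over_ord.
under eq_bigr do rewrite -[topw _ _]mul1r.
rewrite (sum_index_fill (fun=> 1)) ?sort_uniq ?enum_uniq //.
have nth_ones k : (k <= flo G)%N -> nth 0 (map (fun=> 1) ord) k = 1 :> R.
  have map_cst (s : seq T) : map (fun=> 1) s = nseq (size s) (1 : R).
    by elim: s => //= j s ->.
  by move=> le_k; rewrite map_cst nth_nseq size_ord (leq_ltn_trans le_k).
rewrite nth_ones // mulr1 big_nat_cond (eq_bigr (fun=> 1)); last first.
  by move=> k /andP[/andP[_ /ltnW/nth_ones ->] _].
by rewrite -big_nat_cond sumr_const_nat subn0 addrC subrK.
Qed.

Lemma sum_topw_large G : (#|A| <= flo G)%N -> \sum_(j in A) topw G j = #|A|%:R.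
Proof.
move=> le_Af; rewrite -sumr_const; apply: eq_bigr => j jA.
rewrite /topw /fill (leq_trans _ le_Af) //.
by rewrite -size_ord index_mem mem_sort mem_enum.
Qed.

Lemma sum_topw_le G : 0 <= G -> \sum_(j in A) topw G j <= G.
Proof.
move=> G0; have [/sum_topw_small -> // | le_Af] := ltnP (flo G) #|A|.
have /andP[le_fG _] := truncn_itv G0.
by rewrite sum_topw_large //; apply: le_trans le_fG; rewrite ler_nat.
Qed.

Lemma cutoff_slack G : cutoff G * (G - \sum_(j in A) topw G j) = 0.
Proof.
have [/sum_topw_small -> | le_Af] := ltnP (flo G) #|A|; first by rewrite subrr mulr0.
by rewrite /cutoff nth_default ?mul0r // size_map size_ord.
Qed.

Lemma topval_le_dual G (y : T -> R) z : 0 <= G -> 0 <= z ->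
  (forall j, j \in A -> 0 <= y j) -> (forall j, j \in A -> v j <= y j + z) ->
  \sum_(j in A) v j * topw G j <= \sum_(j in A) y j + G * z.
Proof.
move=> G0 z0 y0 v_le.
have topw01 j : 0 <= topw G j <= 1 := topw_itv j G0.
apply: (@le_trans _ _ (\sum_(j in A) (y j * topw G j + z * topw G j))).
  apply: ler_sum => j jA; rewrite -mulrDl ler_wpM2r ?v_le //.
  by case/andP: (topw01 j).
rewrite big_split /= -mulr_sumr mulrC lerD ?ler_wpM2r ?sum_topw_le //.
by apply: ler_sum => j jA; rewrite ler_piMr ?y0 //; case/andP: (topw01 j).
Qed.

Hypothesis v_ge0 : forall j, j \in A -> 0 <= v j.

Lemma nth_vals_ge0 k : 0 <= nth 0 vals k.
Proof.
have [lt_k | le_k] := ltnP k (size vals); last by rewrite nth_default.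
by move/mapP: (mem_nth 0 lt_k) => [j]; rewrite mem_sort mem_enum => /v_ge0 ? ->.
Qed.

Lemma nth_vals_le k1 k2 : (k1 <= k2)%N -> nth 0 vals k2 <= nth 0 vals k1.
Proof.
move=> le_k12; have [lt_k2 | le_k2] := ltnP k2 (size vals); last first.
  by rewrite nth_default ?nth_vals_ge0.
have geR_trans : transitive (fun p q : R => q <= p).
  by move=> p q r /= le_qp le_rq; apply: le_trans le_rq le_qp.
have vals_sorted : sorted (fun p q : R => q <= p) vals.
  by rewrite sorted_map; apply: sort_sorted => p q; apply: le_total.
apply: (sorted_leq_nth geR_trans (@lexx _ _) 0 vals_sorted) => //.
by rewrite inE (leq_ltn_trans le_k12).
Qed.

Lemma cutoff_ge0 G : 0 <= cutoff G.
Proof. exact: nth_vals_ge0. Qed.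

Lemma topw_exchange G j p : j \in A -> 0 <= p <= 1 ->
  0 <= (v j - cutoff G) * (topw G j - p).
Proof.
rewrite -mem_enum -(mem_sort (fun j k => v k <= v j)) => j_ord /andP[p0 p1].
have -> : v j = nth 0 vals (index j ord) by rewrite (nth_map j) ?index_mem ?nth_index.
rewrite /topw /fill /cutoff; case: ltngtP => [lt_jf | lt_fj | ->].
- apply: mulr_ge0; last by rewrite subr_ge0.
  by rewrite subr_ge0; apply: nth_vals_le; apply: ltnW.
- apply: mulr_le0; last by rewrite sub0r oppr_le0.
  by rewrite subr_le0; apply: nth_vals_le; apply: ltnW.
- by rewrite subrr mul0r.
Qed.

Lemma topval_max G (phi : T -> R) : 0 <= G ->
  (forall j, j \in A -> 0 <= phi j <= 1) -> \sum_(j in A) phi j <= G ->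
  \sum_(j in A) v j * phi j <= \sum_(j in A) v j * topw G j.
Proof.
move=> G0 phi01 sum_phi; rewrite -subr_ge0 -sumrB.
(* The gap splits into exchange terms, each nonnegative since topw is sorted
   like v around the cutoff, plus the cutoff times the unused budget. *)
have split_gap j : v j * topw G j - v j * phi j
    = (v j - cutoff G) * (topw G j - phi j) + cutoff G * (topw G j - phi j).
  by ring.
rewrite (eq_bigr _ (fun j _ => split_gap j)) big_split /= -mulr_sumr sumrB.
have -> : cutoff G * (\sum_(j in A) topw G j - \sum_(j in A) phi j)
    = cutoff G * (G - \sum_(j in A) phi j).
  by move: (cutoff_slack G); rewrite !mulrBr; lra.
rewrite addr_ge0 ?mulr_ge0 ?cutoff_ge0 ?subr_ge0 //.
by apply: sumr_ge0 => j jA; apply: topw_exchange => //; apply: phi01.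
Qed.


Lemma topval_dual_attained G : 0 <= G ->
  [/\ forall j, j \in A -> 0 <= (v j - cutoff G) * topw G j,
      forall j, j \in A -> v j <= (v j - cutoff G) * topw G j + cutoff G
    & \sum_(j in A) (v j - cutoff G) * topw G j + G * cutoff G
      = \sum_(j in A) v j * topw G j].
Proof.
move=> G0; split.
- move=> j jA; have := topw_exchange (p := 0) G jA.
  by rewrite subr0 lexx ler01; apply.
- move=> j jA; have := topw_exchange (p := 1) G jA.
  by rewrite lexx ler01 mulrBr mulr1 => /(_ isT); lra.
- under eq_bigr do rewrite mulrBl; rewrite sumrB -mulr_sumr.
  by move: (cutoff_slack G); rewrite mulrBr; lra.
Qed.

Lemma topval_mono G1 G2 : 0 <= G1 -> G1 <= G2 ->
  \sum_(j in A) v j * topw G1 j <= \sum_(j in A) v j * topw G2 j.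
Proof.
move=> G10 le_G12; apply: topval_max; first exact: le_trans le_G12.
  by move=> j _; apply: topw_itv.
exact: le_trans (sum_topw_le G10) le_G12.
Qed.

Lemma topval_le_sum G : 0 <= G ->
  \sum_(j in A) v j * topw G j <= \sum_(j in A) v j.
Proof.
move=> G0; apply: ler_sum => j jA.
by rewrite ler_piMr ?v_ge0 //; case/andP: (topw_itv j G0).
Qed.

End FractionalKnapsack.

Lemma sgnK (R : archiRealFieldType) (t : R) : sgn t * t = `|t|.
Proof.
rewrite /sgn; case: ifP => [t0 | /negbT]; first by rewrite mul1r ger0_norm.
by rewrite -ltNge mulN1r => /ltr0_norm ->.
Qed.

Lemma normr_sgn (R : archiRealFieldType) (t : R) : `|sgn t| = 1.
Proof. by rewrite /sgn; case: ifP; rewrite ?normrN normr1. Qed.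

Lemma sgn_itv (R : archiRealFieldType) (t : R) : -1 <= sgn t <= 1.
Proof. by rewrite /sgn; case: ifP => _; rewrite ?lexx ?ler01 /=; lra. Qed.

(* How the coefficient -sgn(t) th of abar is shared between the multipliers
   lam and mu of the two bounds -u <= alpha x <= u. *)
Lemma sgn_split (R : archiRealFieldType) (t th : R) : 0 <= th ->
  let lam := th * ((1 - sgn t) / 2) in let mu := th * ((1 + sgn t) / 2) in
  [/\ th = lam + mu, lam - mu = - (sgn t * th), 0 <= lam & 0 <= mu].
Proof.
move=> th0 lam mu; have /andP[sgn_lo sgn_hi] := sgn_itv t.
split; rewrite /lam /mu.
- by field.
- by field.
- by rewrite mulr_ge0 // divr_ge0 //; lra.
- by rewrite mulr_ge0 // divr_ge0 //; lra.
Qed.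

Lemma diff_mul_ge_Nnorm (R : archiRealFieldType) (al lam mu x : R) :
  0 <= al -> 0 <= lam -> 0 <= mu ->
  - (al * `|x| * (lam + mu)) <= al * (lam - mu) * x.
Proof.
move=> al0 lam0 mu0; rewrite -subr_ge0.
have -> : al * (lam - mu) * x - - (al * `|x| * (lam + mu))
    = al * (lam * (`|x| + x) + mu * (`|x| - x)) by ring.
have le_x := ler_norm x; have le_Nx : - x <= `|x| by rewrite -normrN ler_norm.
by rewrite mulr_ge0 // addr_ge0 // mulr_ge0 //; lra.
Qed.

Lemma sum_unitv (R : archiRealFieldType) m (k : 'I_m) (F : 'I_m -> R) :
  \sum_i F i * unitv R k i = F k.
Proof.
rewrite (bigD1 k) //= /unitv eqxx mulr1 big1 ?addr0 // => i /negbTE ->.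
exact: mulr0.
Qed.

Definition weight (R : archiRealFieldType) (m n : nat)
  (alpha : 'I_m -> 'I_n -> R) (i : 'I_m) (x : 'I_n -> R) (j : 'I_n) : R :=
  alpha i j * `|x j|.

Section Rows.
Variables (R : archiRealFieldType) (m n : nat) (J : 'I_m -> {set 'I_n})
  (alpha : 'I_m -> 'I_n -> R).

Local Notation th i x := (topw (J i) (weight alpha i x)).

Lemma P_topval i G x :
  P J alpha i G x = \sum_(j in J i) weight alpha i x j * th i x G j.
Proof.
have cei_cases : cei G = flo G /\ (flo G)%:R = G \/ cei G = (flo G).+1.
  by rewrite /cei; case: eqP; [left | right].
rewrite topvalE /P; case: cei_cases => [[-> fG] | ->].
  by rewrite eqxx fG subrr mul0r.
by rewrite gtn_eqF.
Qed.

Lemma abarE a i G x j : abar a J alpha i G x j =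
  if j \in J i then a i j - sgn (x j) * alpha i j * th i x G j else a i j.
Proof.
rewrite /abar /topw /fill; case: (j \in J i) => //=.
case: ifP => _; first by rewrite mulr1.
by case: ifP => _; rewrite ?mulr0 ?subr0.
Qed.

Hypothesis alpha_ge0 : forall i j, j \in J i -> 0 <= alpha i j.

Lemma weight_ge0 i x j : j \in J i -> 0 <= weight alpha i x j.
Proof. by move=> jJ; rewrite mulr_ge0 ?alpha_ge0. Qed.

Lemma abar_neq0 a i G x : 0 <= G ->
  (exists2 j, j \in J i & alpha i j < `|a i j|) \/
  (exists2 j, j \notin J i & a i j != 0) ->
  abar a J alpha i G x <> (fun=> 0).
Proof.
move=> G0 [[j jJ lt_a] | [j jJ a_neq0]] abar0; have := congr1 (fun f => f j) abar0;
  rewrite /= abarE ?(negbTE jJ) ?jJ; last exact/eqP.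
move/eqP; rewrite subr_eq0 => /eqP a_eq; move: lt_a.
have /andP[th0 th1] := topw_itv (J i) (weight alpha i x) j G0.
rewrite a_eq !normrM normr_sgn mul1r ger0_norm ?alpha_ge0 // ger0_norm //.
by rewrite ltNge ler_piMr ?alpha_ge0.
Qed.

End Rows.

Section DualityGap.
Variables (R : archiRealFieldType) (m n : nat)
  (a : 'I_m -> 'I_n -> R) (b : 'I_m -> R) (J : 'I_m -> {set 'I_n})
  (alpha : 'I_m -> 'I_n -> R) (xhat : 'I_n -> R) (Glow : 'I_m -> R).

Hypothesis alpha_ge0 : forall i j, j \in J i -> 0 <= alpha i j.
Hypothesis Glow_opt :
  forall i, Ihat a b J alpha xhat i -> is_Glow a b J alpha xhat i (Glow i).
Hypothesis Glow_unique : forall i, Ihat a b J alpha xhat i ->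
  forall G, 0 <= G <= cardJ R J i -> s a b xhat i = P J alpha i G xhat -> G = Glow i.
Hypothesis xhat_feas : forall i, b i <= \sum_j a i j * xhat j.

Local Notation wt i := (weight alpha i xhat).
Local Notation th i := (topw (J i) (weight alpha i xhat)).
Local Notation s := (s a b xhat).
Local Notation Ihat := (Ihat a b J alpha xhat).

Lemma s_ge0 i : 0 <= s i.
Proof. by rewrite subr_ge0. Qed.

Lemma IhatE i : Ihat i <-> s i <= \sum_(j in J i) wt i j.
Proof. by split=> [[] | le_s] //; split; first exact: s_ge0. Qed.

Lemma Glow_itv i : Ihat i -> 0 <= Glow i <= cardJ R J i.
Proof.
move=> /Glow_opt[[w [[_ w01] <-]] _]; rewrite sumr_ge0 /=; last first.
  by move=> j /w01/andP[].
by rewrite /cardJ -sumr_const ler_sum // => j /w01/andP[].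
Qed.

Lemma P_Glow i : Ihat i -> P J alpha i (Glow i) xhat = s i.
Proof.
move=> hI; have [[w [[w_val w01] w_sum]] w_min] := Glow_opt hI.
have /andP[G0 _] := Glow_itv hI.
rewrite P_topval; apply/eqP; rewrite eq_le; apply/andP; split; last first.
  rewrite -w_val; apply: topval_max => //; last by rewrite w_sum.
  exact: weight_ge0.
rewrite leNgt; apply/negP => lt_sP.
set p := \sum_(j in J i) _ in lt_sP.
have p_gt0 : 0 < p := le_lt_trans (s_ge0 i) lt_sP.
have /andP[r_ge0 r_lt1] : 0 <= s i / p < 1.
  by rewrite divr_ge0 ?s_ge0 ?ltW //= ltr_pdivrMr // mul1r.
(* Scaled by s_i / P_i(Glow_i) < 1, the greedy vector would beat Glow_i
   in its own LP. *)
have feas : lowLP_feas a b J alpha xhat i (fun j => s i / p * th i (Glow i) j).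
  split.
    under eq_bigr do rewrite mulrCA; rewrite -mulr_sumr.
    by rewrite [X in _ * X](_ : _ = p) // divfK ?gt_eqF.
  move=> j _; have /andP[th0 th1] := topw_itv (J i) (wt i) j G0.
  by rewrite mulr_ge0 //= mulr_ile1 // ltW.
have := w_min _ feas; rewrite -mulr_sumr.
have := sum_topw_le (J i) (wt i) G0.
move=> le_th le_G; have Glow0 : Glow i = 0 by nra.
move: p_gt0; rewrite /p Glow0.
by under eq_bigr do rewrite topw0 mulr0; rewrite big1 ?ltxx.
Qed.

Lemma ThetaP G : Theta a b J alpha xhat Glow G <->
  forall i, 0 <= G i <= cardJ R J i /\ P J alpha i (G i) xhat <= s i.
Proof.
split=> [hT i | hR i].
  have [theta_I theta_nI] := hT i; rewrite P_topval.
  have [le_s | lt_s] := leP (s i) (\sum_(j in J i) wt i j).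
    have hI : Ihat i by apply/IhatE.
    have /andP[G0 le_GGlow] := theta_I hI; have /andP[_ le_Glow] := Glow_itv hI.
    rewrite G0 (le_trans le_GGlow) // -(P_Glow hI) P_topval.
    by split=> //; apply: topval_mono => //; exact: weight_ge0.
  have hnI : ~ Ihat i by move/IhatE; rewrite leNgt lt_s.
  have /andP[G0 le_G] := theta_nI hnI; rewrite G0 le_G; split=> //.
  apply/ltW/(le_lt_trans _ lt_s).
  by apply: topval_le_sum => //; exact: weight_ge0.
have [/andP[G0 le_G] P_le] := hR i; split=> [hI | _]; last by rewrite G0.
rewrite G0 leNgt /=; apply/negP => lt_GlowG.
have /andP[Glow0 _] := Glow_itv hI.
have P_eq : s i = P J alpha i (G i) xhat.
  apply/eqP; rewrite eq_le P_le andbT -{1}(P_Glow hI) !P_topval.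
  by apply: topval_mono => //; [exact: weight_ge0 | exact: ltW].
by move: lt_GlowG; rewrite (Glow_unique hI _ P_eq) ?ltxx // G0.
Qed.

Let wt_ge0 i j : j \in J i -> 0 <= wt i j.
Proof. exact: weight_ge0. Qed.

Lemma dg_objE c pi lam mu : (forall j, \sum_i a i j * pi i
    + \sum_(i | j \in J i) alpha i j * (lam i j - mu i j) = c j) ->
  dg_obj b xhat c pi
  = \sum_i (pi i * s i + \sum_(j in J i) alpha i j * (lam i j - mu i j) * xhat j).
Proof.
move=> c_eq; rewrite /dg_obj.
under eq_bigr do rewrite -c_eq mulrDl !mulr_suml.
rewrite big_split /= [X in X + _ - _]exchange_big.
rewrite [X in _ + X - _](exchange_big_dep xpredT) //= -big_split -sumrB /=.
apply: eq_bigr => i _; under eq_bigr do rewrite mulrAC.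
by rewrite -mulr_suml /Defs.s; ring.
Qed.

Variables (Omega : ('I_m -> R) -> Prop) (t : 'I_m -> R).
Hypothesis t_lb : forall i G phi, sub_feas a b J alpha xhat Omega Glow i G phi ->
  t i <= sub_obj a b J alpha xhat i phi.

Lemma sub_objE i phi :
  sub_obj a b J alpha xhat i phi = s i - \sum_(j in J i) wt i j * phi j.
Proof. by rewrite /sub_obj /Defs.s addrAC. Qed.

Lemma dg_robust G c u y z pi phi lam mu :
  dg_feas a b J alpha xhat Omega G c u y z pi phi lam mu ->
  forall i, P J alpha i (G i) xhat <= s i.
Proof.
move=> [_ [hij [hi _]]] i; have [row_ge z0 /andP[G0 _] _ _] := hi i.
have y_ge0 j : j \in J i -> 0 <= y i j by case/(hij i).
have wt_le j : j \in J i -> wt i j <= y i j + z i.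
  move=> jJ; have [u_ge1 u_ge2 yzu _ _] := hij i j jJ; apply: le_trans yzu.
  have : `|alpha i j * xhat j| <= u i j by rewrite ler_norml; apply/andP; split; lra.
  by rewrite normrM (ger0_norm (alpha_ge0 jJ)).
rewrite P_topval; apply: le_trans (topval_le_dual G0 z0 y_ge0 wt_le) _.
by move: row_ge; rewrite /Defs.s; lra.
Qed.

Lemma dg_row_bound i G p phi lam mu :
  Theta a b J alpha xhat Glow G -> Omega G -> 0 <= p ->
  \sum_(j in J i) phi j <= G i * p ->
  (forall j, j \in J i ->
     [/\ phi j <= p, phi j = lam j + mu j, 0 <= phi j, 0 <= lam j & 0 <= mu j]) ->
  p * t i <= p * s i + \sum_(j in J i) alpha i j * (lam j - mu j) * xhat j.
Proof.
move=> hT hO p0 sum_phi hphi.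
have lb : - \sum_(j in J i) wt i j * phi j
    <= \sum_(j in J i) alpha i j * (lam j - mu j) * xhat j.
  rewrite -sumrN; apply: ler_sum => j jJ; have [_ -> _ lam0 mu0] := hphi j jJ.
  by apply: diff_mul_ge_Nnorm => //; apply: alpha_ge0.
suff : p * t i <= p * s i - \sum_(j in J i) wt i j * phi j by lra.
move: p0; rewrite le_eqVlt => /orP[/eqP p0 | p_gt0].
  subst p; rewrite !mul0r big1 ?subr0 // => j /hphi[le_p _ phi0 _ _].
  have -> : phi j = 0 by apply/eqP; rewrite eq_le le_p phi0.
  by rewrite mulr0.
have feas : sub_feas a b J alpha xhat Omega Glow i G (fun j => phi j / p).
  split; first by rewrite /= -mulr_suml ler_pdivrMr.
  split=> // j /hphi[le_p _ phi0 _ _].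
  by rewrite divr_ge0 ?(ltW p_gt0) //= ler_pdivrMr // mul1r.
have := ler_wpM2l (ltW p_gt0) (t_lb feas); rewrite sub_objE mulrBr mulr_sumr.
by under eq_bigr do rewrite mulrCA [p * _]mulrCA mulfV ?mulr1 ?gt_eqF //.
Qed.

Lemma dg_weak_duality istar : (forall i, t istar <= t i) ->
  forall G c u y z pi phi lam mu,
  dg_feas a b J alpha xhat Omega G c u y z pi phi lam mu ->
  t istar <= dg_obj b xhat c pi.
Proof.
move=> t_min G c u y z pi phi lam mu feas; have hT : Theta a b J alpha xhat Glow G.
  apply/ThetaP => i; split; last exact: dg_robust feas i.
  by case: feas => [_ [_ [/(_ i)[]]]].
case: feas => [hO [hij [hi [sum_pi c_eq]]]].
rewrite (dg_objE c_eq) -[t istar]mul1r -sum_pi mulr_suml.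
apply: ler_sum => i _; have [_ _ _ pi0 sum_phi] := hi i.
apply: le_trans (dg_row_bound hT hO pi0 sum_phi _); first by rewrite ler_wpM2l.
by move=> j /(hij i)[].
Qed.

Variables (Gs : 'I_m -> 'I_m -> R) (phis : 'I_m -> 'I_n -> R).
Hypothesis Gs_feas :
  forall i, sub_feas a b J alpha xhat Omega Glow i (Gs i) (phis i).
Hypothesis t_val : forall i, t i = sub_obj a b J alpha xhat i (phis i).

Lemma Gs_robust i k :
  0 <= Gs i k <= cardJ R J k /\ P J alpha k (Gs i k) xhat <= s k.
Proof. by have [_ [_ [/ThetaP]]] := Gs_feas i. Qed.

Lemma t_valE i : t i = s i - P J alpha i (Gs i i) xhat.
Proof.
have [sum_phi [phi01 [hT hO]]] := Gs_feas i.
have [/andP[G0 _] _] := Gs_robust i i.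
apply/eqP; rewrite eq_le P_topval; apply/andP; split.
  have feas : sub_feas a b J alpha xhat Omega Glow i (Gs i) (th i (Gs i i)).
    by split; [exact: sum_topw_le | split=> // j _; exact: topw_itv].
  by have := t_lb feas; rewrite sub_objE.
rewrite t_val sub_objE lerD2l lerN2; apply: topval_max => //; exact: wt_ge0.
Qed.

Lemma dg_obj_abar istar :
  dg_obj b xhat (abar a J alpha istar (Gs istar istar) xhat) (unitv R istar)
  = t istar.
Proof.
have abar_x j : abar a J alpha istar (Gs istar istar) xhat j * xhat j
    = a istar j * xhat j
      - (if j \in J istar then wt istar j * th istar (Gs istar istar) j else 0).
  rewrite abarE; case: ifP => _; last by rewrite subr0.
  by rewrite /weight -(sgnK (xhat j)); ring.
rewrite /dg_obj sum_unitv (t_valE istar) P_topval (eq_bigr _ (fun j _ => abar_x j)).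
by rewrite sumrB -big_mkcond /Defs.s; ring.
Qed.

Lemma dg_attained istar :
  let c := abar a J alpha istar (Gs istar istar) xhat in
  exists u y z phi lam mu,
    dg_feas a b J alpha xhat Omega (Gs istar) c u y z (unitv R istar) phi lam mu /\
    dg_obj b xhat c (unitv R istar) = t istar.
Proof.
move=> c.
pose ths := topw (J istar) (wt istar) (Gs istar istar).
have G0 k : 0 <= Gs istar k by case: (Gs_robust istar k) => /andP[].
have ths01 j : 0 <= ths j <= 1 := topw_itv _ _ j (G0 istar).
have ths0 j : 0 <= ths j by case/andP: (ths01 j).
pose W := fun k => cutoff (J k) (wt k) (Gs istar k).
pose sel := fun (f : 'I_n -> R) k j => if k == istar then f j else 0.
(* u = |alpha xhat|, (y, z) is the knapsack dual certificate of every row, and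
   phi = topw lives on row istar only. *)
exists (fun k => wt k), (fun k j => (wt k j - W k) * th k (Gs istar k) j), W,
  (sel ths),
  (sel (fun j => ths j * ((1 - sgn (xhat j)) / 2))),
  (sel (fun j => ths j * ((1 + sgn (xhat j)) / 2))).
split; last exact: dg_obj_abar.
have dual k := topval_dual_attained (@wt_ge0 k) (G0 k).
split; first by have [_ [_ [_ ?]]] := Gs_feas istar.
split.
  move=> k j jJ; have [y0 wt_le _] := dual k; have al0 := alpha_ge0 jJ.
  have le_x := ler_norm (xhat j); have le_Nx : - xhat j <= `|xhat j|.
    by rewrite -normrN ler_norm.
  split; [| | exact: wt_le | exact: y0 |].
  - by rewrite /weight -mulrDr mulr_ge0 //; lra.
  - by rewrite /weight -mulrN -mulrDr mulr_ge0 //; lra.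
  rewrite /sel /unitv; case: eqP => _; last by split; rewrite ?addr0.
  have /andP[_ th1] := ths01 j.
  by have [? _ ? ?] := sgn_split (xhat j) (ths0 j); split.
split.
  move=> k; have [_ _ sum_eq] := dual k; have [G_itv P_le] := Gs_robust istar k.
  split=> //.
  - by move: P_le; rewrite P_topval -sum_eq /Defs.s /W; lra.
  - by apply: cutoff_ge0; exact: wt_ge0.
  - by rewrite /unitv; case: eqP.
  rewrite /sel /unitv; case: eqP => [-> | _]; first by rewrite mulr1 sum_topw_le.
  by rewrite big1 ?mulr0.
split.
  by rewrite -(sum_unitv istar (fun=> 1)); apply: eq_bigr => i _; rewrite mul1r.
move=> j; rewrite (sum_unitv istar (fun i => a i j)) /c abarE; case: ifP => jJ.
  rewrite (bigD1 istar) //= /sel eqxx big1 ?addr0.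
    by have [_ -> _ _] := sgn_split (xhat j) (ths0 j); rewrite /ths; ring.
  by move=> k /andP[_ /negbTE ->]; rewrite subrr mulr0.
rewrite big1 ?addr0 // => k jk; rewrite /sel; case: eqP => [k_eq | _].
  by move: jk; rewrite k_eq jJ.
by rewrite subrr mulr0.
Qed.

End DualityGap.

Theorem theorem5 (R : archiRealFieldType) (m n : nat)
  (a : 'I_m -> 'I_n -> R) (b : 'I_m -> R) (J : 'I_m -> {set 'I_n})
  (alpha : 'I_m -> 'I_n -> R) (xhat : 'I_n -> R)
  (Omega : ('I_m -> R) -> Prop) (Glow : 'I_m -> R)
  (t : 'I_m -> R) (Gs : 'I_m -> 'I_m -> R) (phis : 'I_m -> 'I_n -> R)
  (istar : 'I_m) :
  (* data assumptions *)
  (forall i j, j \in J i -> 0 <= alpha i j) ->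
  convex_set Omega ->
  (* underline Gamma_i, i in \hat I *)
  (forall i, Ihat a b J alpha xhat i -> is_Glow a b J alpha xhat i (Glow i)) ->
  (* standing assumption: uniqueness of Gamma_i with s_i = P_i(Gamma_i, xhat) *)
  (forall i, Ihat a b J alpha xhat i ->
     forall G, 0 <= G <= cardJ R J i ->
       s a b xhat i = P J alpha i G xhat -> G = Glow i) ->
  (* xhat feasible *)
  (forall i, \sum_j a i j * xhat j >= b i) ->
  (* t_i optimal value, (Gamma^(i), phi^(i)) optimal solution of subproblem i *)
  (forall i, sub_feas a b J alpha xhat Omega Glow i (Gs i) (phis i)) ->
  (forall i, t i = sub_obj a b J alpha xhat i (phis i)) ->
  (forall i G phi, sub_feas a b J alpha xhat Omega Glow i G phi ->
     t i <= sub_obj a b J alpha xhat i phi) ->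
  (* i* in argmin t_i *)
  (forall i, t istar <= t i) ->
  (* conclusions *)
  (forall G c u y z pi phi lam mu,
     dg_feas a b J alpha xhat Omega G c u y z pi phi lam mu ->
     t istar <= dg_obj b xhat c pi) /\
  (exists u y z phi lam mu,
     dg_feas a b J alpha xhat Omega (Gs istar)
       (abar a J alpha istar (Gs istar istar) xhat) u y z (unitv R istar)
       phi lam mu /\
     dg_obj b xhat (abar a J alpha istar (Gs istar istar) xhat) (unitv R istar)
       = t istar) /\
  ((forall i, (exists2 j, j \in J i & `|a i j| > alpha i j) \/
              (exists2 j, j \notin J i & a i j != 0)) ->
   abar a J alpha istar (Gs istar istar) xhat <> (fun _ => 0) /\
   (forall i G x, 0 <= G <= cardJ R J i -> abar a J alpha i G x <> (fun _ => 0))).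
Proof.
move=> alpha_ge0 _ Glow_opt Glow_unique xhat_feas Gs_feas t_val t_lb t_min.
have [/andP[G0 _] _] :=
  Gs_robust alpha_ge0 Glow_opt Glow_unique xhat_feas Gs_feas istar istar.
split; [|split].
- exact: (dg_weak_duality alpha_ge0 Glow_opt Glow_unique xhat_feas t_lb t_min).
- exact: (dg_attained alpha_ge0 Glow_opt Glow_unique xhat_feas t_lb Gs_feas t_val).
- move=> abar_cond; split; first exact: (abar_neq0 alpha_ge0 G0 (abar_cond istar)).
  by move=> i G x /andP[G_ge0 _]; exact: (abar_neq0 alpha_ge0 G_ge0 (abar_cond i)).
Qed.
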